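(* A semigroup $X$ is inverse if and only if there is an inverse subsemigroup $S\subset\upsilon(X)$ with $X\subset S$ (where $X$ is identified with the set of principal ultrafilters $\langle x\rangle$, $x\in X$).
   Context: An upfamily on $X$ is a family of nonempty subsets of $X$ closed under taking supersets in $X$; $\upsilon(X)$ is the set of all upfamilies, with operation $\mathcal A*\mathcal B=\big\langle \bigcup_{a\in A} a*B_a : A\in\mathcal A,\ \{B_a\}_{a\in A}\subset\mathcal B\big\rangle$, where $\langle\mathcal C\rangle=\{A\subset X:\exists C\in\mathcal C,\ C\subset A\}$; $x\in X$ is identified with $\langle x\rangle=\{A\subset X:x\in A\}$. A semigroup $S$ is inverse if each $x\in S$ has a unique $x^{-1}\in S$ with $xx^{-1}x=x$ and $x^{-1}xx^{-1}=x^{-1}$. *)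

From Stdlib Require Import Classical FunctionalExtensionality PropExtensionality.

Section Upfam.
Variable X : Type.
Variable op : X -> X -> X.

Definition is_semigroup : Prop :=
  forall x y z, op (op x y) z = op x (op y z).

Definition is_inverse_semigroup : Prop :=
  forall x, exists! y, op (op x y) x = x /\ op (op y x) y = y.

Definition is_upfamily (F : (X -> Prop) -> Prop) : Prop :=
  (forall A, F A -> exists x, A x) /\
  (forall A B, F A -> (forall x, A x -> B x) -> F B).

Definition principal (x : X) : (X -> Prop) -> Prop := fun A => A x.

(* A * B = < { U_{a in A} a * B_a : A in F, (B_a)_{a in A} in G } > *)
Definition upfam_mul (F G : (X -> Prop) -> Prop) : (X -> Prop) -> Prop :=
  fun C => exists A, F A /\
    exists Bf : X -> (X -> Prop),
      (forall a, A a -> G (Bf a)) /\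
      (forall a b, A a -> Bf a b -> C (op a b)).

Definition is_inverse_subsemigroup_upsilon
    (S : ((X -> Prop) -> Prop) -> Prop) : Prop :=
  (forall F, S F -> is_upfamily F) /\
  (forall F G, S F -> S G -> S (upfam_mul F G)) /\
  (forall F, S F -> exists! G, S G /\
       upfam_mul (upfam_mul F G) F = F /\ upfam_mul (upfam_mul G F) G = G).
End Upfam.

(* The map x |-> <x> is an injective homomorphism X -> upsilon(X)
   ([principal_mul], [principal_inj]); hence x, y are mutually inverse in X
   exactly when <x>, <y> are mutually inverse in upsilon(X)
   ([principal_inverse_pair]).
   - If X is inverse, the image {<x> | x in X} is itself an inverse
     subsemigroup of upsilon(X) ([principal_image_inverse]).
   - Conversely, let S be such a subsemigroup and G the inverse of <x> in S.
     Unfolding <x> * G * <x> = <x> on the set {x} produces b with x b x = x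
     ([regular_of_upfamily_inverse]); then b x b is an inverse of x
     ([regular_inverse]).  Any inverse y of x gives an inverse <y> of <x>
     inside S, so <y> = G by uniqueness in S, and injectivity of <_>
     makes y unique. *)
From Stdlib Require Import FunctionalExtensionality PropExtensionality.

Section PrincipalUltrafilters.
Variable X : Type.
Variable op : X -> X -> X.

Local Notation "<< x >>" := (principal X x).
Local Notation "F ** G" := (upfam_mul X op F G) (at level 40, left associativity).

Definition inverse_pair (x y : X) : Prop :=
  op (op x y) x = x /\ op (op y x) y = y.

Definition upfam_inverse_pair (F G : (X -> Prop) -> Prop) : Prop :=
  F ** G ** F = F /\ G ** F ** G = G.

Lemma principal_mul (x y : X) : <<x>> ** <<y>> = <<op x y>>.
Proof.
  apply functional_extensionality; intro C; apply propositional_extensionality.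
  unfold upfam_mul, principal; split.
  - intros [A [HA [Bf [HB HC]]]]. apply HC; auto.
  - intro HC. exists (fun t => t = x). split; [reflexivity|].
    exists (fun _ t => t = y). split; [intros; reflexivity|].
    intros a b -> ->; exact HC.
Qed.

Lemma principal_inj (a b : X) : <<a>> = <<b>> -> a = b.
Proof.
  intro H. assert (E := f_equal (fun F => F (fun t => t = a)) H).
  simpl in E. unfold principal in E. symmetry. rewrite <- E. reflexivity.
Qed.

Lemma principal_upfamily (x : X) : is_upfamily X <<x>>.
Proof.
  split.
  - intros A HA. exists x. exact HA.
  - intros A B HA HAB. exact (HAB x HA).
Qed.

Lemma principal_inverse_pair (x y : X) :
  inverse_pair x y <-> upfam_inverse_pair <<x>> <<y>>.
Proof.
  unfold inverse_pair, upfam_inverse_pair. rewrite !principal_mul.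
  split.
  - intros [E1 E2]. rewrite E1, E2. split; reflexivity.
  - intros [E1 E2]. split; apply principal_inj; assumption.
Qed.

(* If <x> * G * <x> = <x> for an upfamily G, then x is regular: the set {x}
   lies in <x> * G * <x>, and unfolding the product yields x = x b x for
   any b in the (nonempty) member of G attached to x. *)
Lemma regular_of_upfamily_inverse (x : X) (G : (X -> Prop) -> Prop) :
  is_upfamily X G -> <<x>> ** G ** <<x>> = <<x>> ->
  exists b, op (op x b) x = x.
Proof.
  intros [Hne _] E.
  assert (Hx : (<<x>> ** G ** <<x>>) (fun t => t = x)) by (rewrite E; reflexivity).
  destruct Hx as [A [[A' [HA' [Bf' [HG HA]]]] [Bf [Hx HC]]]].
  destruct (Hne _ (HG x HA')) as [b Hb].
  exists b. apply HC; [apply HA; auto|]. apply Hx. apply HA; auto.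
Qed.

Lemma principal_image_inverse :
  is_inverse_semigroup X op ->
  is_inverse_subsemigroup_upsilon X op (fun F => exists x, F = <<x>>).
Proof.
  intro Hinv. split; [|split].
  - intros F [x ->]. apply principal_upfamily.
  - intros F G [x ->] [y ->]. exists (op x y). apply principal_mul.
  - intros F [x ->]. destruct (Hinv x) as [y [Hxy Huniq]].
    exists <<y>>. split.
    + split; [eauto|]. apply principal_inverse_pair, Hxy.
    + intros G [[z ->] Hxz]. f_equal. apply Huniq, principal_inverse_pair, Hxz.
Qed.

Hypothesis Hsg : is_semigroup X op.

Lemma regular_inverse (x b : X) :
  op (op x b) x = x -> inverse_pair x (op (op b x) b).
Proof.
  intro Hb.
  assert (Hb' : op x (op b x) = x) by (rewrite <- Hsg; exact Hb).
  assert (Hbw : forall w, op x (op b (op x w)) = op x w)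
    by (intro w; rewrite <- (Hsg b x w), <- Hsg, Hb'; reflexivity).
  unfold inverse_pair. rewrite !Hsg, !Hbw, ?Hb'. split; reflexivity.
Qed.

Lemma inverse_of_inverse_subsemigroup (S : ((X -> Prop) -> Prop) -> Prop) :
  is_inverse_subsemigroup_upsilon X op S -> (forall x, S <<x>>) ->
  is_inverse_semigroup X op.
Proof.
  intros [Hup [_ Hinv]] Hprin x.
  destruct (Hinv _ (Hprin x)) as [G [[HG [E1 _]] HG_uniq]].
  destruct (regular_of_upfamily_inverse x G (Hup _ HG) E1) as [b Hb].
  assert (Hto_G : forall z, inverse_pair x z -> <<z>> = G).
  { intros z Hxz. symmetry. apply HG_uniq.
    split; [apply Hprin|]. apply principal_inverse_pair, Hxz. }
  exists (op (op b x) b). split.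
  - apply regular_inverse, Hb.
  - intros y Hxy. apply principal_inj.
    rewrite (Hto_G y Hxy). apply Hto_G, regular_inverse, Hb.
Qed.

End PrincipalUltrafilters.

Theorem corollary3p2 (X : Type) (op : X -> X -> X) (Hsg : is_semigroup X op) :
  is_inverse_semigroup X op <->
  exists S : ((X -> Prop) -> Prop) -> Prop,
    is_inverse_subsemigroup_upsilon X op S /\ (forall x, S (principal X x)).
Proof.
  split.
  - intro Hinv. exists (fun F => exists x, F = principal X x). split.
    + apply principal_image_inverse, Hinv.
    + intro x. exists x. reflexivity.
  - intros [S [HS Hprin]]. exact (inverse_of_inverse_subsemigroup X op Hsg S HS Hprin).
Qed.
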